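(* Let $R$ be a ring, $*\in\{l,r,\emptyset\}$, $S\in\mathbb{L}_*(R,\mathfrak{a})$ and $T\in\mathbb{L}_*(R,\mathfrak{b})$ with $S\subseteq T$. Then $\mathfrak{a}\subseteq\mathfrak{b}$, and for $*\in\{l,\emptyset\}$ the map $S^{-1}R\to T^{-1}R$, $s^{-1}r\mapsto s^{-1}r$ (with $s\in S\subseteq T$) is an $R$-homomorphism with kernel $S^{-1}(\mathfrak{b}/\mathfrak{a})=\overline{S}^{-1}(\mathfrak{b}/\mathfrak{a})$, where $\overline{S}=\{s+\mathfrak{a}:s\in S\}$. The analogous statement (with right fractions $rs^{-1}\mapsto rs^{-1}$) holds for $*=r$.
   Context: Rings are associative with $1$. Multiplicative set: $SS\subseteq S$, $1\in S$, $0\notin S$. $R\langle S^{-1}\rangle=R\langle X_S\rangle/I_S$ ($R\langle X_S\rangle$ freely generated by $R$ and noncommuting $x_s$, $I_S$ generated by $sx_s-1,x_ss-1$); $\mathrm{ass}_R(S)=\ker(R\to R\langle S^{-1}\rangle)$. Left localizable: $R\langle S^{-1}\rangle\ne0$ and every element has the form $s^{-1}r:=(x_s+I_S)(r+I_S)$; right localizable: every element has the form $rs^{-1}:=(r+I_S)(x_s+I_S)$ (and ring nonzero); localizable: both. $\mathbb{L}_*(R,\mathfrak{a})$ is the set of $*$-localizable sets ($*=l$ left, $r$ right, $\emptyset$ two-sided) $S$ with $\mathrm{ass}_R(S)=\mathfrak{a}$. For $*\in\{l,\emptyset\}$, $S^{-1}R$ denotes $R\langle S^{-1}\rangle$; it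 is $R$-isomorphic to the Ore localization $\overline{S}^{-1}(R/\mathfrak{a})$, and $\overline{S}^{-1}(\mathfrak{b}/\mathfrak{a})=\{\overline{s}^{-1}(b+\mathfrak{a}): s\in S,b\in\mathfrak{b}\}$. *)

From HB Require Import structures.
From mathcomp Require Import all_boot all_algebra.
Set Implicit Arguments. Unset Strict Implicit. Unset Printing Implicit Defensive.
Import GRing.Theory.
Local Open Scope ring_scope.

Definition multiplicative (R : pzRingType) (S : R -> Prop) : Prop :=
  [/\ S 1, ~ S 0 & forall x y, S x -> S y -> S (x * y)].

Definition is_inverse (A : pzRingType) (x u : A) : Prop := u * x = 1 /\ x * u = 1.

Definition inverts (R A : pzRingType) (S : R -> Prop) (phi : {rmorphism R -> A}) :=
  forall s, S s -> exists u, is_inverse (phi s) u.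

(* (A, phi) is the universal localization R<S^{-1}> (characterised up to unique
   isomorphism by its universal property). *)
Definition univ_loc (R A : pzRingType) (S : R -> Prop) (phi : {rmorphism R -> A}) :=
  inverts S phi /\
  forall (C : pzRingType) (g : {rmorphism R -> C}), inverts S g ->
    (exists h : {rmorphism A -> C}, forall r, h (phi r) = g r) /\
    (forall h1 h2 : {rmorphism A -> C},
        (forall r, h1 (phi r) = g r) -> (forall r, h2 (phi r) = g r) -> h1 =1 h2).

Definition lfrac (R A : pzRingType) (phi : {rmorphism R -> A}) (s r : R) (a : A) :=
  exists u, is_inverse (phi s) u /\ a = u * phi r.
Definition rfrac (R A : pzRingType) (phi : {rmorphism R -> A}) (s r : R) (a : A) :=
  exists u, is_inverse (phi s) u /\ a = phi r * u.

Definition ass (R A : pzRingType) (phi : {rmorphism R -> A}) (x : R) : Prop := phi x = 0.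

Inductive side := LeftSide | RightSide | TwoSided.

Definition left_localizable (R A : pzRingType) (S : R -> Prop) (phi : {rmorphism R -> A}) :=
  (1 : A) <> 0 /\ forall a : A, exists s r, S s /\ lfrac phi s r a.
Definition right_localizable (R A : pzRingType) (S : R -> Prop) (phi : {rmorphism R -> A}) :=
  (1 : A) <> 0 /\ forall a : A, exists s r, S s /\ rfrac phi s r a.

Definition localizable (k : side) (R A : pzRingType) (S : R -> Prop)
    (phi : {rmorphism R -> A}) :=
  match k with
  | LeftSide => left_localizable S phi
  | RightSide => right_localizable S phi
  | TwoSided => left_localizable S phi /\ right_localizable S phi
  end.

(* S ∈ L_k(R, a), where (A, phi) is R<S^{-1}> *)
Definition in_L (k : side) (R A : pzRingType) (S : R -> Prop)
    (phi : {rmorphism R -> A}) (a : R -> Prop) :=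
  multiplicative S /\ univ_loc S phi /\ localizable k S phi /\
  (forall x, a x <-> ass phi x).

(* Since S ⊆ T, the localization map psi : R -> T^{-1}R inverts S, so the universal
   property of S^{-1}R yields h : S^{-1}R -> T^{-1}R with h \o phi = psi; in particular
   ker phi ⊆ ker psi.  The map h sends a fraction s^{-1}r to s^{-1}r, and a fraction
   vanishes exactly when its numerator does, since its denominator is invertible.  As every
   element of S^{-1}R is a fraction over S, ker h consists of the fractions s^{-1}y with
   s ∈ S and y ∈ ker psi.  The right-sided case is the mirror image. *)
From HB Require Import structures.
From mathcomp Require Import all_boot all_algebra.
Set Implicit Arguments. Unset Strict Implicit. Unset Printing Implicit Defensive.
Import GRing.Theory.
Local Open Scope ring_scope.

Lemma inverts_sub (R A : pzRingType) (S T : R -> Prop) (f : {rmorphism R -> A}) :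
  (forall x, S x -> T x) -> inverts T f -> inverts S f.
Proof. by move=> ST invT s /ST; exact: invT. Qed.

Lemma rmorph_inverse (A B : pzRingType) (f : {rmorphism A -> B}) (x u : A) :
  is_inverse x u -> is_inverse (f x) (f u).
Proof. by move=> [ux xu]; split; rewrite -rmorphM ?ux ?xu rmorph1. Qed.

Lemma univ_loc_extend (R A B : pzRingType) (S T : R -> Prop)
    (phi : {rmorphism R -> A}) (psi : {rmorphism R -> B}) :
  univ_loc S phi -> inverts T psi -> (forall x, S x -> T x) ->
  exists h : {rmorphism A -> B}, forall r, h (phi r) = psi r.
Proof.
by move=> [_ univS] invT ST; have [] := univS B psi (inverts_sub ST invT).
Qed.

Lemma lfrac_eq0 (R A : pzRingType) (f : {rmorphism R -> A}) (s r : R) (x : A) :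
  lfrac f s r x -> x = 0 <-> f r = 0.
Proof.
move=> [u [[_ su] ->]]; split=> [ur0 | ->]; last by rewrite mulr0.
by rewrite -[f r]mul1r -su -mulrA ur0 mulr0.
Qed.

Lemma rfrac_eq0 (R A : pzRingType) (f : {rmorphism R -> A}) (s r : R) (x : A) :
  rfrac f s r x -> x = 0 <-> f r = 0.
Proof.
move=> [u [[us _] ->]]; split=> [ru0 | ->]; last by rewrite mul0r.
by rewrite -[f r]mulr1 -us mulrA ru0 mul0r.
Qed.

Section LocalizationMap.

Variables (R A B : pzRingType) (S : R -> Prop).
Variables (phi : {rmorphism R -> A}) (psi : {rmorphism R -> B}).
Variable h : {rmorphism A -> B}.
Hypothesis h_phi : forall r, h (phi r) = psi r.

Lemma ass_sub x : ass phi x -> ass psi x.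
Proof. by rewrite /ass -h_phi => ->; rewrite rmorph0. Qed.

Lemma lfrac_map s r x : lfrac phi s r x -> lfrac psi s r (h x).
Proof.
move=> [u [inv_u ->]]; exists (h u); split; last by rewrite rmorphM h_phi.
by rewrite -h_phi; exact: rmorph_inverse.
Qed.

Lemma rfrac_map s r x : rfrac phi s r x -> rfrac psi s r (h x).
Proof.
move=> [u [inv_u ->]]; exists (h u); split; last by rewrite rmorphM h_phi.
by rewrite -h_phi; exact: rmorph_inverse.
Qed.

Lemma ker_left_localizable x : left_localizable S phi ->
  h x = 0 <-> exists s y, [/\ S s, ass psi y & lfrac phi s y x].
Proof.
move=> [_ lfracS]; split=> [hx0 | [s [y [_ psiy0 xsy]]]].
  have [s [r [Ss xsr]]] := lfracS x.
  by exists s, r; split=> //; apply/(lfrac_eq0 (lfrac_map xsr)).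
exact/(lfrac_eq0 (lfrac_map xsy)).
Qed.

Lemma ker_right_localizable x : right_localizable S phi ->
  h x = 0 <-> exists s y, [/\ S s, ass psi y & rfrac phi s y x].
Proof.
move=> [_ rfracS]; split=> [hx0 | [s [y [_ psiy0 xsy]]]].
  have [s [r [Ss xsr]]] := rfracS x.
  by exists s, r; split=> //; apply/(rfrac_eq0 (rfrac_map xsr)).
exact/(rfrac_eq0 (rfrac_map xsy)).
Qed.

End LocalizationMap.

Lemma localizable_left (k : side) (R A : pzRingType) (S : R -> Prop)
    (phi : {rmorphism R -> A}) :
  k <> RightSide -> localizable k S phi -> left_localizable S phi.
Proof. by case: k => //= _ []. Qed.

Theorem lemma1p10 (k : side) (R A B : pzRingType) (S T : R -> Prop)
    (phi : {rmorphism R -> A}) (psi : {rmorphism R -> B}) (a b : R -> Prop) :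
  in_L k S phi a -> in_L k T psi b -> (forall x, S x -> T x) ->
  (forall x, a x -> b x) /\
  (k <> RightSide ->
     exists f : {rmorphism A -> B},
       (forall r, f (phi r) = psi r) /\
       (forall s r x, S s -> lfrac phi s r x -> lfrac psi s r (f x)) /\
       (forall x, f x = 0 <-> exists s y, [/\ S s, b y & lfrac phi s y x])) /\
  (k = RightSide ->
     exists f : {rmorphism A -> B},
       (forall r, f (phi r) = psi r) /\
       (forall s r x, S s -> rfrac phi s r x -> rfrac psi s r (f x)) /\
       (forall x, f x = 0 <-> exists s y, [/\ S s, b y & rfrac phi s y x])).
Proof.
move=> [_ [univS [locS aE]]] [_ [[invT _] [_ bE]]] ST.
have [h h_phi] := univ_loc_extend univS invT ST.
split=> [x /aE /(ass_sub h_phi) /bE //|]; split=> [kl | kr].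
- exists h; split=> //; split=> [s r x _ | x]; first exact: lfrac_map.
  apply: iff_trans (ker_left_localizable h_phi x (localizable_left kl locS)) _.
  by split=> -[s [y [Ss yb xsy]]]; exists s, y; split=> //; apply/bE.
- subst k; exists h; split=> //; split=> [s r x _ | x]; first exact: rfrac_map.
  apply: iff_trans (ker_right_localizable h_phi x locS) _.
  by split=> -[s [y [Ss yb xsy]]]; exists s, y; split=> //; apply/bE.
Qed.
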